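(* Let $\mathcal{K}^{\langle\infty\rangle}$ be an unbounded simple nested fractal. For every $M\in\mathbb{Z}$ there exist positive constants $C_6(M),C_7(M)$ such that for all $x,y\in\mathcal{K}^{\langle\infty\rangle}$, $$C_6(M)\,|x-y|\le d_M(x,y)\le\max\{2,\ C_7(M)\,|x-y|^{d_f}\},$$ where $d_f=\log N/\log L$.
   Context: Setting: $L>1$, $N\ge2$, $\nu_1=0,\dots,\nu_N\in\mathbb{R}^2$, $\Psi_i(x)=x/L+\nu_i$, and $\mathcal{K}^{\langle 0\rangle}=\bigcup_i\Psi_i(\mathcal{K}^{\langle 0\rangle})$ is a planar simple nested fractal (with $V_0^{\langle0\rangle}$ its set of essential fixed points, $k=\#V_0^{\langle0\rangle}\ge3$). $\mathcal{K}^{\langle M\rangle}=L^M\mathcal{K}^{\langle 0\rangle}$, $\mathcal{K}^{\langle\infty\rangle}=\bigcup_{M\ge0}\mathcal{K}^{\langle M\rangle}$. An $M$-complex is $\mathcal{K}^{\langle M\rangle}+\sum_{j=M+1}^{J}L^j\nu_{i_j}$ ($J\ge M+1$, $i_j\in\{1,\dots,N\}$); $\mathcal{T}_M$ is the set of all $M$-complexes. The $M$-graph distance: $d_M(x,y)=0$ if $x=y$; $d_M(x,y)=1$ if $x\ne y$ and some $\Delta_M\in\mathcal{T}_M$ contains both; otherwise $d_M(x,y)$ is the smallest $n>1$ for which there exist $\Delta_M^{(1)},\dots,\Delta_M^{(n)}\in\mathcal{T}_M$ with $x\in\Delta_M^{(1)}$, $y\in\Delta_M^{(n)}$ and $\Delta_M^{(i)}\cap\Delta_M^{(i+1)}\ne\emptyset$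 for $1\le i\le n-1$. $|\cdot|$ is the Euclidean norm. *)

From Stdlib Require Import Reals Lra List ZArith Relations.
Open Scope R_scope.

Definition pt := (R * R)%type.
Definition padd (p q : pt) : pt := (fst p + fst q, snd p + snd q).
Definition psub (p q : pt) : pt := (fst p - fst q, snd p - snd q).
Definition pscale (c : R) (p : pt) : pt := (c * fst p, c * snd p).
Definition pdot (p q : pt) : R := fst p * fst q + snd p * snd q.
Definition pnorm (p : pt) : R := sqrt (pdot p p).
Definition pdist (p q : pt) : R := pnorm (psub p q).
Definition pzero : pt := (0, 0).

Definition open_set (U : pt -> Prop) : Prop :=
  forall p, U p -> exists e, 0 < e /\ forall q, pdist p q < e -> U q.
Definition closed_set (A : pt -> Prop) : Prop :=
  forall p, ~ A p -> exists e, 0 < e /\ forall q, pdist p q < e -> ~ A q.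
Definition bounded_set (A : pt -> Prop) : Prop :=
  exists r, forall p, A p -> pnorm p <= r.

Definition Psi (L : R) (nu : nat -> pt) (i : nat) (x : pt) : pt :=
  padd (pscale (/ L) x) (nu i).
Definition idx_ok (N i : nat) : Prop := (1 <= i <= N)%nat.
Definition Psiw (L : R) (nu : nat -> pt) (w : list nat) (x : pt) : pt :=
  fold_right (fun i acc => Psi L nu i acc) x w.
Definition word_ok (N : nat) (w : list nat) : Prop := Forall (idx_ok N) w.

Definition img (f : pt -> pt) (A : pt -> Prop) : pt -> Prop :=
  fun z => exists a, A a /\ z = f a.

Definition is_attractor (L : R) (N : nat) (nu : nat -> pt) (K : pt -> Prop) : Prop :=
  (exists p, K p) /\ closed_set K /\ bounded_set K /\
  (forall z, K z <-> exists i, idx_ok N i /\ img (Psi L nu i) K z).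

Definition essential_fixed (L : R) (N : nat) (nu : nat -> pt) (x : pt) : Prop :=
  (exists i, idx_ok N i /\ Psi L nu i x = x) /\
  exists y j k l, idx_ok N j /\ Psi L nu j y = y /\ idx_ok N k /\ idx_ok N l /\
    k <> l /\ Psi L nu k x = Psi L nu l y.

Definition Vn (L : R) (N : nat) (nu : nat -> pt) (n : nat) (z : pt) : Prop :=
  exists w v, length w = n /\ word_ok N w /\ essential_fixed L N nu v /\ z = Psiw L nu w v.

(* reflection with respect to the perpendicular bisector of the segment [x, y] *)
Definition refl (x y z : pt) : pt :=
  let u := psub x y in
  let m := pscale (/ 2) (padd x y) in
  psub z (pscale (2 * pdot (psub z m) u / pdot u u) u).

Definition V1_edge (L : R) (N : nat) (nu : nat -> pt) (x y : pt) : Prop :=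
  Vn L N nu 1 x /\ Vn L N nu 1 y /\
  exists i, idx_ok N i /\ img (Psi L nu i) (essential_fixed L N nu) x /\
            img (Psi L nu i) (essential_fixed L N nu) y.

Definition simple_nested_fractal (L : R) (N : nat) (nu : nat -> pt) (K0 : pt -> Prop) : Prop :=
  is_attractor L N nu K0 /\
  (exists a b, a <> b /\ essential_fixed L N nu a /\ essential_fixed L N nu b) /\
  (exists U, open_set U /\ (exists p, U p) /\ bounded_set U /\
     (forall i, idx_ok N i -> forall z, img (Psi L nu i) U z -> U z) /\
     (forall i j, idx_ok N i -> idx_ok N j -> i <> j -> forall z,
        img (Psi L nu i) U z -> ~ img (Psi L nu j) U z)) /\
  (forall i j, idx_ok N i -> idx_ok N j -> i <> j -> forall z,
     (img (Psi L nu i) K0 z /\ img (Psi L nu j) K0 z) <->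
     (img (Psi L nu i) (essential_fixed L N nu) z /\
      img (Psi L nu j) (essential_fixed L N nu) z)) /\
  (forall x y, essential_fixed L N nu x -> essential_fixed L N nu y -> x <> y ->
     forall n z, Vn L N nu n z -> Vn L N nu n (refl x y z)) /\
  (forall x y, Vn L N nu 1 x -> Vn L N nu 1 y ->
     clos_refl_trans pt (V1_edge L N nu) x y).

Definition Kinf (L : R) (K0 : pt -> Prop) (x : pt) : Prop :=
  exists M : nat, img (pscale (L ^ M)) K0 x.

(* the M-complex  L^M K0 + sum_{j=M+1}^{J} L^j nu_{i_j}, with J = M + 1 + m
   and i_{M+1+t} = iota t *)
Definition shift (L : R) (nu : nat -> pt) (M : Z) (m : nat) (iota : nat -> nat) : pt :=
  fold_right padd pzero
    (map (fun t => pscale (powerRZ L (M + 1 + Z.of_nat t)) (nu (iota t))) (seq 0 (S m))).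
Definition complex (L : R) (nu : nat -> pt) (K0 : pt -> Prop) (M : Z) (m : nat)
  (iota : nat -> nat) : pt -> Prop :=
  img (fun k => padd (pscale (powerRZ L M) k) (shift L nu M m iota)) K0.
Definition is_complex (L : R) (N : nat) (nu : nat -> pt) (K0 : pt -> Prop) (M : Z)
  (D : pt -> Prop) : Prop :=
  exists m iota, (forall t, (t <= m)%nat -> idx_ok N (iota t)) /\
    (forall z, D z <-> complex L nu K0 M m iota z).

Definition chain (L : R) (N : nat) (nu : nat -> pt) (K0 : pt -> Prop) (M : Z)
  (x y : pt) (n : nat) : Prop :=
  (1 <= n)%nat /\ exists D : nat -> pt -> Prop,
    (forall i, (i < n)%nat -> is_complex L N nu K0 M (D i)) /\
    D 0%nat x /\ D (n - 1)%nat y /\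
    (forall i, (i + 1 < n)%nat -> exists z, D i z /\ D (i + 1)%nat z).

Definition dM_is (L : R) (N : nat) (nu : nat -> pt) (K0 : pt -> Prop) (M : Z)
  (x y : pt) (n : nat) : Prop :=
  (x = y /\ n = 0%nat) \/
  (x <> y /\ chain L N nu K0 M x y n /\ forall m, chain L N nu K0 M x y m -> (n <= m)%nat).

Definition rpow (a b : R) : R := if Req_EM_T a 0 then 0 else Rpower a b.

(* Let x <> y be at distance d and let k be least with d < rho L^(M+k), where rho is
   a separation constant: two distinct (M+k)-complexes either touch or are at distance
   at least rho L^(M+k).  So the (M+k)-complexes containing x and y touch, and since the
   graph on V_1 is connected, each of them is crossed by a chain of at most N^k distinct
   M-complexes; hence d_M(x,y) <= 2 N^k, which is 2 for k = 0 and at most C d^(d_f)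
   otherwise, because rho L^(M+k-1) <= d and L^(d_f) = N.  Conversely an M-complex has
   diameter at most 2 r L^M, where K0 lies in the disc of radius r, so
   |x - y| <= 2 r L^M d_M(x,y). *)

From Pilot Require Import Defs.
From Stdlib Require Import Reals ZArith.
From Stdlib Require Import Lra Lia Psatz List Relations Wf_nat Classical ClassicalEpsilon.
Open Scope R_scope.

(** * Euclidean plane *)

Ltac pt_destruct := repeat match goal with p : pt |- _ => destruct p end.
Ltac pt_ext := unfold padd, psub, pscale, pzero; simpl; f_equal.

Lemma pnorm_ge0 p : 0 <= pnorm p.
Proof. apply sqrt_pos. Qed.

Lemma pnorm_scale c p : pnorm (pscale c p) = Rabs c * pnorm p.
Proof.
  destruct p as [a b]; unfold pnorm, pdot, pscale; simpl.
  replace (c * a * (c * a) + c * b * (c * b)) with ((c * c) * (a * a + b * b)) by ring.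
  rewrite sqrt_mult_alt by nra. rewrite <- sqrt_Rsqr_abs. reflexivity.
Qed.

Lemma pnorm_add_le p q : pnorm (padd p q) <= pnorm p + pnorm q.
Proof.
  destruct p as [a b], q as [c d]; unfold pnorm, pdot, padd; simpl.
  assert (hA : 0 <= a * a + b * b) by nra. assert (hB : 0 <= c * c + d * d) by nra.
  assert (cauchy_schwarz : a * c + b * d <= sqrt (a * a + b * b) * sqrt (c * c + d * d)).
  { rewrite <- sqrt_mult by assumption. eapply Rle_trans; [apply Rle_abs|].
    rewrite <- sqrt_Rsqr_abs. apply sqrt_le_1_alt. unfold Rsqr.
    pose proof (Rle_0_sqr (a * d - b * c)). unfold Rsqr in *. nra. }
  pose proof (sqrt_pos (a * a + b * b)); pose proof (sqrt_pos (c * c + d * d)).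
  rewrite <- (sqrt_square (sqrt (a * a + b * b) + sqrt (c * c + d * d))) by lra.
  apply sqrt_le_1_alt.
  pose proof (sqrt_sqrt _ hA); pose proof (sqrt_sqrt _ hB). nra.
Qed.

Lemma pnorm_eq0 p : pnorm p = 0 -> p = pzero.
Proof.
  destruct p as [a b]; unfold pnorm, pdot; simpl; intros h.
  apply sqrt_eq_0 in h; [|nra]. pt_ext; nra.
Qed.

Lemma pnorm_lt_eps_eq0 p : (forall eps, 0 < eps -> pnorm p < eps) -> p = pzero.
Proof.
  intros h. apply pnorm_eq0. pose proof (pnorm_ge0 p).
  destruct (Req_dec (pnorm p) 0) as [|hne]; [assumption|].
  specialize (h (pnorm p) ltac:(lra)). lra.
Qed.

Lemma Rabs_fst_le_pnorm p : Rabs (fst p) <= pnorm p.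
Proof.
  destruct p as [a b]; unfold pnorm, pdot; simpl.
  rewrite <- sqrt_Rsqr_abs. apply sqrt_le_1_alt. unfold Rsqr. nra.
Qed.

Lemma Rabs_snd_le_pnorm p : Rabs (snd p) <= pnorm p.
Proof.
  destruct p as [a b]; unfold pnorm, pdot; simpl.
  rewrite <- sqrt_Rsqr_abs. apply sqrt_le_1_alt. unfold Rsqr. nra.
Qed.

Lemma pnorm_le_Rabs_coords p : pnorm p <= Rabs (fst p) + Rabs (snd p).
Proof.
  destruct p as [a b]; unfold pnorm, pdot; simpl.
  pose proof (Rabs_pos a); pose proof (Rabs_pos b).
  rewrite <- (sqrt_square (Rabs a + Rabs b)) by lra. apply sqrt_le_1_alt.
  assert (Rabs a * Rabs a = a * a) by (rewrite <- Rabs_mult; apply Rabs_right; nra).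
  assert (Rabs b * Rabs b = b * b) by (rewrite <- Rabs_mult; apply Rabs_right; nra).
  nra.
Qed.

Lemma pdist_ge0 p q : 0 <= pdist p q.
Proof. apply pnorm_ge0. Qed.

Lemma pdist_sym p q : pdist p q = pdist q p.
Proof.
  unfold pdist. replace (psub p q) with (pscale (-1) (psub q p)) by (pt_destruct; pt_ext; ring).
  rewrite pnorm_scale. replace (Rabs (-1)) with 1 by (rewrite Rabs_left; lra). ring.
Qed.

Lemma pdist_triangle p q r : pdist p r <= pdist p q + pdist q r.
Proof.
  unfold pdist. replace (psub p r) with (padd (psub p q) (psub q r)) by (pt_destruct; pt_ext; ring).
  apply pnorm_add_le.
Qed.

Lemma pdist_le_pnorm_add p q : pdist p q <= pnorm p + pnorm q.
Proof.
  unfold pdist. replace (psub p q) with (padd p (pscale (-1) q)) by (pt_destruct; pt_ext; ring).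
  eapply Rle_trans; [apply pnorm_add_le|]. rewrite pnorm_scale. replace (Rabs (-1)) with 1 by (rewrite Rabs_left; lra). lra.
Qed.

Lemma pdist_xx p : pdist p p = 0.
Proof.
  unfold pdist. replace (psub p p) with (pscale 0 p) by (pt_destruct; pt_ext; ring).
  rewrite pnorm_scale, Rabs_R0. ring.
Qed.

Lemma psub_eq0 p q : psub p q = pzero -> p = q.
Proof. pt_destruct; unfold psub, pzero; simpl; intros h; injection h; intros. f_equal; lra. Qed.

Lemma padd_pscale_inj c a b s : c <> 0 -> padd (pscale c a) s = padd (pscale c b) s -> a = b.
Proof.
  intros hc h. pt_destruct; unfold padd, pscale in h; simpl in h. injection h; intros h2 h1.
  f_equal; apply (Rmult_eq_reg_l c); lra.
Qed.

(** * Sequential compactness *)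

Definition strictly_increasing (phi : nat -> nat) := forall n, (phi n < phi (S n))%nat.

Lemma strictly_increasing_ge_id phi : strictly_increasing phi -> forall n, (n <= phi n)%nat.
Proof. intros h n; induction n; [lia|]. specialize (h n). lia. Qed.

Lemma strictly_increasing_mono phi : strictly_increasing phi ->
  forall n m, (n <= m)%nat -> (phi n <= phi m)%nat.
Proof. intros h n m hnm. induction hnm; [lia|]. specialize (h m). lia. Qed.

Lemma strictly_increasing_comp f g : strictly_increasing f -> strictly_increasing g ->
  strictly_increasing (fun n => f (g n)).
Proof.
  intros hf hg n. pose proof (strictly_increasing_mono f hf (S (g n)) (g (S n)) (hg n)).
  specialize (hf (g n)). lia.
Qed.

Lemma inv_INR_S_lt eps : 0 < eps -> exists n0, forall n, (n0 <= n)%nat -> / INR (S n) < eps.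
Proof.
  intros he. destruct (archimed_cor1 eps he) as [n0 [h1 h2]]. exists n0. intros n hn.
  eapply Rle_lt_trans; [|exact h1].
  apply Rinv_le_contravar; [apply lt_0_INR; lia|apply le_INR; lia].
Qed.

Lemma Un_cv_subseq u l phi : Un_cv u l -> strictly_increasing phi -> Un_cv (fun n => u (phi n)) l.
Proof.
  intros h hphi eps he. destruct (h eps he) as [n0 hn0]. exists n0. intros n hn.
  apply hn0. pose proof (strictly_increasing_ge_id phi hphi n). lia.
Qed.

Lemma bounded_Un_subseq_cv (u : nat -> R) r : (forall n, Rabs (u n) <= r) ->
  exists phi l, strictly_increasing phi /\ Un_cv (fun n => u (phi n)) l.
Proof.
  intros hb.
  assert (hX : forall n, -r <= u n <= r) by (intros n; specialize (hb n); split_Rabs; lra).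
  destruct (Bolzano_Weierstrass u _ (compact_P3 (-r) r) hX) as [l hl].
  assert (hnear : forall nk : nat * nat,
             exists p, (fst nk <= p)%nat /\ Rabs (u p - l) < / INR (S (snd nk))).
  { intros [n0 k].
    assert (hpos : 0 < / INR (S k)) by (apply Rinv_0_lt_compat, lt_0_INR; lia).
    destruct (hl (disc l (mkposreal _ hpos)) n0) as [p [hp hv]].
    - exists (mkposreal _ hpos). intros y hy; exact hy.
    - exists p; split; assumption. }
  apply choice in hnear as [g hg].
  assert (hnear' : forall n0 k, (n0 <= g (n0, k))%nat /\ Rabs (u (g (n0, k)) - l) < / INR (S k))
    by (intros n0 k; exact (hg (n0, k))).
  set (phi := fix phi (n : nat) : nat :=
         match n with O => g (O, O) | S n => g (S (phi n), S n) end).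
  exists phi, l. split.
  - intros n. simpl. destruct (hnear' (S (phi n)) (S n)). lia.
  - assert (hp : forall n, Rabs (u (phi n) - l) < / INR (S n)) by (intros [|n]; apply hnear').
    intros eps he. destruct (inv_INR_S_lt eps he) as [n0 hn0]. exists n0. intros n hn.
    eapply Rlt_trans; [apply hp|]. apply hn0; assumption.
Qed.

Definition pt_cv (s : nat -> pt) (l : pt) :=
  forall eps, 0 < eps -> exists n0, forall n, (n0 <= n)%nat -> pdist (s n) l < eps.

Lemma pt_cv_subseq (s : nat -> pt) l phi : pt_cv s l -> strictly_increasing phi -> pt_cv (fun n => s (phi n)) l.
Proof.
  intros h hphi eps he. destruct (h eps he) as [n0 hn0]. exists n0. intros n hn.
  apply hn0. pose proof (strictly_increasing_ge_id phi hphi n). lia.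
Qed.

Lemma closed_set_pt_cv (A : pt -> Prop) (s : nat -> pt) l : Defs.closed_set A -> (forall n, A (s n)) -> pt_cv s l -> A l.
Proof.
  intros hA hs hl. apply NNPP; intros hn. destruct (hA l hn) as [e [he hball]].
  destruct (hl e he) as [n0 hn0]. apply (hball (s n0)); [|apply hs].
  rewrite pdist_sym. apply hn0; lia.
Qed.

Lemma closed_bounded_subseq_cv (A : pt -> Prop) (s : nat -> pt) : Defs.closed_set A -> Defs.bounded_set A -> (forall n, A (s n)) ->
  exists phi l, strictly_increasing phi /\ A l /\ pt_cv (fun n => s (phi n)) l.
Proof.
  intros hcl [r hr] hs.
  destruct (bounded_Un_subseq_cv (fun n => fst (s n)) r) as [f1 [l1 [hf1 hc1]]].
  { intros n. eapply Rle_trans; [apply Rabs_fst_le_pnorm|apply hr, hs]. }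
  destruct (bounded_Un_subseq_cv (fun n => snd (s (f1 n))) r) as [f2 [l2 [hf2 hc2]]].
  { intros n. eapply Rle_trans; [apply Rabs_snd_le_pnorm|apply hr, hs]. }
  pose proof (Un_cv_subseq _ _ f2 hc1 hf2) as hc1'.
  assert (hcv : pt_cv (fun n => s (f1 (f2 n))) (l1, l2)).
  { intros eps he. destruct (hc1' (eps / 2) ltac:(lra)) as [n1 h1].
    destruct (hc2 (eps / 2) ltac:(lra)) as [n2 h2]. exists (Nat.max n1 n2). intros n hn.
    specialize (h1 n ltac:(lia)). specialize (h2 n ltac:(lia)). unfold Rdist in h1, h2.
    unfold pdist. eapply Rle_lt_trans; [apply pnorm_le_Rabs_coords|]. simpl in *. lra. }
  exists (fun n => f1 (f2 n)), (l1, l2). split; [|split].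
  - apply strictly_increasing_comp; assumption.
  - apply (closed_set_pt_cv A _ _ hcl (fun n => hs (f1 (f2 n))) hcv).
  - exact hcv.
Qed.

Lemma pnorm_offset_le a b a' b' e :
  pnorm (padd (psub a b) e) <= pdist a a' + pdist b' b + pnorm (padd (psub a' b') e).
Proof.
  unfold pdist.
  replace (padd (psub a b) e) with (padd (psub a a') (padd (psub b' b) (padd (psub a' b') e)))
    by (pt_destruct; pt_ext; ring).
  eapply Rle_trans; [apply pnorm_add_le|].
  pose proof (pnorm_add_le (psub b' b) (padd (psub a' b') e)). lra.
Qed.

Lemma compact_offset_gap (A B : pt -> Prop) e :
  Defs.closed_set A -> Defs.bounded_set A -> Defs.closed_set B -> Defs.bounded_set B ->
  (forall a b, A a -> B b -> padd (psub a b) e <> pzero) ->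
  exists rho, 0 < rho /\ forall a b, A a -> B b -> rho <= pnorm (padd (psub a b) e).
Proof.
  intros hAc hAb hBc hBb hne. apply NNPP; intros hno.
  assert (hseq : forall n : nat, exists ab : pt * pt,
            A (fst ab) /\ B (snd ab) /\ pnorm (padd (psub (fst ab) (snd ab)) e) < / INR (S n)).
  { intros n. apply NNPP; intros hq. apply hno. exists (/ INR (S n)).
    split; [apply Rinv_0_lt_compat, lt_0_INR; lia|].
    intros a b ha hb. apply Rnot_lt_le; intros hlt. apply hq. exists (a, b); auto. }
  apply choice in hseq as [s hs].
  destruct (closed_bounded_subseq_cv A (fun n => fst (s n)) hAc hAb (fun n => proj1 (hs n)))
    as [f1 [a [hf1 [ha hca]]]].
  destruct (closed_bounded_subseq_cv B (fun n => snd (s (f1 n))) hBc hBb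
              (fun n => proj1 (proj2 (hs (f1 n))))) as [f2 [b [hf2 [hb hcb]]]].
  pose proof (pt_cv_subseq _ _ f2 hca hf2) as hca'.
  apply (hne a b ha hb), pnorm_lt_eps_eq0. intros eps he.
  destruct (hca' (eps / 3) ltac:(lra)) as [n1 h1]. destruct (hcb (eps / 3) ltac:(lra)) as [n2 h2].
  destruct (inv_INR_S_lt (eps / 3) ltac:(lra)) as [n3 h3].
  set (n := Nat.max n1 (Nat.max n2 n3)).
  specialize (h1 n ltac:(lia)). specialize (h2 n ltac:(lia)). simpl in h1, h2.
  assert (h4 : / INR (S (f1 (f2 n))) < eps / 3).
  { apply h3. pose proof (strictly_increasing_ge_id _ (strictly_increasing_comp f1 f2 hf1 hf2) n).
    lia. }
  pose proof (proj2 (proj2 (hs (f1 (f2 n))))) as h5.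
  pose proof (pnorm_offset_le a b (fst (s (f1 (f2 n)))) (snd (s (f1 (f2 n)))) e) as h6.
  rewrite pdist_sym in h6. lra.
Qed.

Lemma closed_invariant_attracting_point (L : R) (f : pt -> pt) (A : pt -> Prop) v :
  1 < L -> Defs.closed_set A -> (exists a, A a) -> (forall a, A a -> A (f a)) ->
  (forall a, psub (f a) v = pscale (/ L) (psub a v)) -> A v.
Proof.
  intros hL hcl [a0 ha0] hinv hcontr. apply NNPP; intros hv.
  destruct (hcl v hv) as [e [he hball]].
  assert (hiter : forall n, A (Nat.iter n f a0)) by (induction n; simpl; auto).
  assert (hdist : forall n, pdist (Nat.iter n f a0) v = / L ^ n * pdist a0 v).
  { induction n as [|n IH]; simpl.
    - rewrite Rinv_1. ring.
    - unfold pdist in *. rewrite hcontr, pnorm_scale, IH, Rabs_right by (left; apply Rinv_0_lt_compat; lra).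
      rewrite Rinv_mult. ring. }
  destruct (Pow_x_infinity L ltac:(rewrite Rabs_right; lra) ((pdist a0 v + 1) / e)) as [n hn].
  specialize (hn n (le_n _)).
  assert (hLn : 0 < L ^ n) by (apply pow_lt; lra).
  rewrite Rabs_right in hn by lra. apply Rge_le in hn.
  apply (hball (Nat.iter n f a0)); [|apply hiter].
  rewrite pdist_sym, hdist. pose proof (pdist_ge0 a0 v).
  apply Rmult_lt_reg_l with (L ^ n); [lra|]. rewrite <- Rmult_assoc, Rinv_r by lra.
  apply Rmult_le_compat_r with (r := e) in hn; [|lra].
  unfold Rdiv in hn. rewrite Rmult_assoc, Rinv_l in hn by lra. lra.
Qed.

Lemma uniform_pos_bound {A : Type} (P : A -> R -> Prop) (l : list A) :
  (forall a r r', P a r -> 0 < r' <= r -> P a r') ->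
  (forall a, In a l -> exists r, 0 < r /\ P a r) ->
  exists r, 0 < r /\ forall a, In a l -> P a r.
Proof.
  intros hmono. induction l as [|a l IH]; intros h.
  - exists 1. split; [lra|]. intros a [].
  - destruct IH as [r1 [hr1 h1]]; [intros b hb; apply h; right; assumption|].
    destruct (h a (or_introl eq_refl)) as [r2 [hr2 h2]].
    exists (Rmin r1 r2). split; [apply Rmin_pos; assumption|].
    intros b [<-|hb].
    + apply (hmono a r2); [assumption|split; [apply Rmin_pos|apply Rmin_r]; assumption].
    + apply (hmono b r1); [apply h1, hb|split; [apply Rmin_pos|apply Rmin_l]; assumption].
Qed.

Lemma least_nat (P : nat -> Prop) n : P n -> exists n0, P n0 /\ forall m, P m -> (n0 <= m)%nat.
Proof.
  intros h. destruct (dec_inh_nat_subset_has_unique_least_element P (fun m => classic (P m)))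
    as [n0 [[hn0 hmin] _]]; [exists n; exact h|].
  exists n0. split; assumption.
Qed.

Lemma powerRZ_unbounded (L c d : R) (M : Z) : 1 < L -> 0 < c ->
  exists k : nat, d < c * powerRZ L (M + Z.of_nat k).
Proof.
  intros hL hc. assert (hM : 0 < c * powerRZ L M) by (apply Rmult_lt_0_compat; [|apply powerRZ_lt]; lra).
  destruct (Pow_x_infinity L ltac:(rewrite Rabs_right; lra) (d / (c * powerRZ L M) + 1)) as [k hk].
  exists k. specialize (hk k (le_n _)).
  rewrite Rabs_right in hk by (left; apply pow_lt; lra). apply Rge_le in hk.
  rewrite powerRZ_add, <- pow_powerRZ, <- Rmult_assoc by lra.
  set (P := c * powerRZ L M) in *.
  apply (Rmult_le_compat_l P) in hk; [|lra].
  replace (P * (d / P + 1)) with (d + P) in hk by (field; lra).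
  lra.
Qed.

(* The point is that L^(d_f) = N for d_f = ln N / ln L. *)
Lemma rpow_scale_lower (L Nr rho d : R) (m : Z) : 1 < L -> 1 <= Nr -> 0 < rho ->
  rho * powerRZ L m <= d ->
  Rpower rho (ln Nr / ln L) * Rpower Nr (IZR m) <= rpow d (ln Nr / ln L).
Proof.
  intros hL hN hrho hd. set (df := ln Nr / ln L).
  assert (hlnL : 0 < ln L) by (rewrite <- ln_1; apply ln_increasing; lra).
  assert (hdf : 0 <= df).
  { unfold df. apply Rmult_le_pos; [|left; apply Rinv_0_lt_compat; assumption].
    rewrite <- ln_1. destruct hN as [hN|<-]; [left; apply ln_increasing; lra|lra]. }
  assert (hpow : 0 < powerRZ L m) by (apply powerRZ_lt; lra).
  assert (hLdf : Rpower L df = Nr).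
  { unfold df, Rpower. replace (ln Nr / ln L * ln L) with (ln Nr) by (field; lra).
    apply exp_ln. lra. }
  unfold rpow. destruct (Req_EM_T d 0) as [h0|_]; [nra|].
  assert (hNm : Rpower Nr (IZR m) = Rpower (powerRZ L m) df).
  { rewrite <- hLdf, Rpower_mult, powerRZ_Rpower, Rpower_mult, Rmult_comm by lra. reflexivity. }
  rewrite hNm, Rpower_mult_distr by assumption.
  apply Rle_Rpower_l; [assumption|]. split; [apply Rmult_lt_0_compat|]; assumption.
Qed.

(** * Cells of the fractal *)

Section NestedFractal.

Variables (L : R) (N : nat) (nu : nat -> pt) (K0 : pt -> Prop).
Hypothesis HL : 1 < L.
Hypothesis HN : (2 <= N)%nat.
Hypothesis Hnu1 : nu 1%nat = pzero.
Hypothesis Hsnf : simple_nested_fractal L N nu K0.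

Notation ok := (idx_ok N).
Notation V0 := (essential_fixed L N nu).
Notation Ps := (Psi L nu).

Lemma K0_nonempty : exists p, K0 p.
Proof. apply Hsnf. Qed.

Lemma K0_closed : Defs.closed_set K0.
Proof. apply Hsnf. Qed.

Lemma K0_bounded : Defs.bounded_set K0.
Proof. apply Hsnf. Qed.

Lemma K0_self_similar z : K0 z <-> exists i, ok i /\ img (Ps i) K0 z.
Proof. apply Hsnf. Qed.

Lemma K0_nesting i j : ok i -> ok j -> i <> j -> forall z,
  img (Ps i) K0 z -> img (Ps j) K0 z -> img (Ps i) V0 z.
Proof. intros hi hj hij z h1 h2. apply (proj1 (proj2 (proj2 (proj2 Hsnf))) i j); auto. Qed.

Lemma V1_connected x y :
  Vn L N nu 1 x -> Vn L N nu 1 y -> clos_refl_trans pt (V1_edge L N nu) x y.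
Proof. apply Hsnf. Qed.

Lemma V0_nonempty : exists v, V0 v.
Proof. destruct Hsnf as [_ [[a [b [_ [ha _]]]] _]]. eauto. Qed.

Lemma idx_ok_1 : ok 1%nat.
Proof. red; lia. Qed.

Lemma Psi_K0 i k : ok i -> K0 k -> K0 (Ps i k).
Proof. intros hi hk. apply K0_self_similar. exists i; split; [|exists k]; auto. Qed.

Lemma powerRZ_L_pos m : 0 < powerRZ L m.
Proof. apply powerRZ_lt; lra. Qed.

Lemma powerRZ_L_succ m : powerRZ L (m + 1) = powerRZ L m * L.
Proof. rewrite powerRZ_add by lra. simpl. ring. Qed.

(* [cell m [i_(m+1); ...; i_J]] is the m-complex L^m K0 + sum_(j = m+1 .. J) L^j nu_(i_j).
   As nu_1 = 0, appending indices 1 to an address does not change its cell. *)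
Fixpoint addr_shift (m : Z) (w : list nat) : pt :=
  match w with
  | nil => pzero
  | i :: w' => padd (pscale (powerRZ L (m + 1)) (nu i)) (addr_shift (m + 1) w')
  end.

Definition cell (m : Z) (w : list nat) : pt -> Prop :=
  img (fun k => padd (pscale (powerRZ L m) k) (addr_shift m w)) K0.

Lemma addr_shift_cons_Psi m i w k :
  padd (pscale (powerRZ L m) k) (addr_shift m (i :: w)) =
  padd (pscale (powerRZ L (m + 1)) (Ps i k)) (addr_shift (m + 1) w).
Proof.
  simpl addr_shift. rewrite powerRZ_L_succ. unfold Psi.
  assert (L <> 0) by lra. pt_destruct; pt_ext; field; assumption.
Qed.

Lemma cell_cons m i w z : cell m (i :: w) z <->
  exists k, K0 k /\ z = padd (pscale (powerRZ L (m + 1)) (Ps i k)) (addr_shift (m + 1) w).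
Proof. split; intros [k [hk ->]]; exists k; split; auto; rewrite addr_shift_cons_Psi; auto. Qed.

Lemma cell_succ m w z : cell (m + 1) w z <-> exists i, ok i /\ cell m (i :: w) z.
Proof.
  split.
  - intros [k [hk ->]]. apply K0_self_similar in hk as [i [hi [k' [hk' ->]]]].
    exists i; split; [assumption|]. apply cell_cons. eauto.
  - intros [i [hi hz]]. apply cell_cons in hz as [k [hk ->]].
    exists (Ps i k). split; [apply Psi_K0|]; auto.
Qed.

Lemma addr_shift_pad m w t : addr_shift m (w ++ repeat 1%nat t) = addr_shift m w.
Proof.
  revert m; induction w as [|i w IH]; intros m; simpl.
  - revert m; induction t as [|t IH]; intros m; simpl; [reflexivity|].
    rewrite IH, Hnu1. pt_ext; ring.
  - rewrite IH. reflexivity.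
Qed.

Lemma cell_pad m w t z : cell m (w ++ repeat 1%nat t) z <-> cell m w z.
Proof. unfold cell. rewrite addr_shift_pad. reflexivity. Qed.

Lemma word_ok_pad w t : word_ok N w -> word_ok N (w ++ repeat 1%nat t).
Proof.
  intros h. apply Forall_app; split; [assumption|].
  apply Forall_forall. intros x hx. apply repeat_spec in hx. subst. apply idx_ok_1.
Qed.

Lemma cell_nil_up m (t : nat) z : cell m nil z -> cell (m + Z.of_nat t) nil z.
Proof.
  induction t as [|t IH]; intros h.
  - rewrite Z.add_0_r. exact h.
  - replace (m + Z.of_nat (S t))%Z with (m + Z.of_nat t + 1)%Z by lia.
    apply cell_succ. exists 1%nat. split; [apply idx_ok_1|].
    apply (cell_pad _ nil 1). auto.
Qed.

Lemma cell_subdivide (t : nat) : forall m w z, cell (m + Z.of_nat t) w z ->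
  exists u, length u = t /\ word_ok N u /\ cell m (u ++ w) z.
Proof.
  induction t as [|t IH]; intros m w z h.
  - exists nil. rewrite Z.add_0_r in h. split; [reflexivity|split; [constructor|exact h]].
  - replace (m + Z.of_nat (S t))%Z with (m + 1 + Z.of_nat t)%Z in h by lia.
    destruct (IH (m + 1)%Z w z h) as [u [hl [hu hz]]].
    apply cell_succ in hz as [i [hi hz]].
    exists (i :: u). split; [simpl; congruence|split; [constructor|]; assumption].
Qed.

Lemma Kinf_in_cell x m : Kinf L K0 x -> exists w, word_ok N w /\ cell m w x.
Proof.
  intros [t [k [hk ->]]].
  assert (h0 : cell (Z.of_nat t) nil (pscale (L ^ t) k)).
  { exists k; split; [assumption|]. rewrite pow_powerRZ. simpl. pt_ext; ring. }
  destruct (Z_le_gt_dec m (Z.of_nat t)) as [hle|hgt].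
  - replace (Z.of_nat t) with (m + Z.of_nat (Z.to_nat (Z.of_nat t - m)))%Z in h0 by lia.
    apply cell_subdivide in h0 as [u [_ [hu hz]]]. exists (u ++ nil).
    split; [apply Forall_app; split; auto|assumption].
  - exists nil. split; [constructor|].
    replace m with (Z.of_nat t + Z.of_nat (Z.to_nat (m - Z.of_nat t)))%Z by lia.
    apply cell_nil_up. assumption.
Qed.

Definition fixpt (c : nat) : pt := pscale (L / (L - 1)) (nu c).

Lemma Psi_fixed_eq c v : Ps c v = v -> v = fixpt c.
Proof.
  unfold Psi, fixpt. destruct v as [a b], (nu c) as [n1 n2]; unfold padd, pscale; simpl.
  intros h. injection h; intros h2 h1.
  replace n1 with (a - / L * a) by lra. replace n2 with (b - / L * b) by lra.
  f_equal; field; lra.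
Qed.

Lemma Psi_fixed_in_K0 c v : ok c -> Ps c v = v -> K0 v.
Proof.
  intros hc hv. apply (closed_invariant_attracting_point L (Ps c) K0 v HL K0_closed K0_nonempty).
  - intros a. apply Psi_K0, hc.
  - intros a. rewrite <- hv at 1. unfold Psi. pt_destruct; pt_ext; ring.
Qed.

Lemma V0_fixed v : V0 v -> exists c, ok c /\ Ps c v = v.
Proof. intros [[c [hc h]] _]. eauto. Qed.

Lemma V0_in_K0 v : V0 v -> K0 v.
Proof. intros h. destruct (V0_fixed v h) as [c [hc e]]. eapply Psi_fixed_in_K0; eauto. Qed.

Lemma V0_in_Psi_image i v : ok i -> V0 v -> img (Ps i) K0 v -> img (Ps i) V0 v.
Proof.
  intros hi hv himg. destruct (V0_fixed v hv) as [c [hc e]].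
  destruct (Nat.eq_dec c i) as [<-|hne].
  - exists v; auto.
  - apply (K0_nesting i c hi hc (not_eq_sym hne) v himg). exists v. split; [apply V0_in_K0|]; auto.
Qed.

Lemma cells_meet_at_vertex X : forall Y m p, length X = length Y -> X <> Y ->
  word_ok N X -> word_ok N Y -> cell m X p -> cell m Y p ->
  exists u, V0 u /\ p = padd (pscale (powerRZ L m) u) (addr_shift m X).
Proof.
  assert (hinj : forall m a b s, padd (pscale (powerRZ L m) a) s = padd (pscale (powerRZ L m) b) s -> a = b)
    by (intros m a b s; apply padd_pscale_inj, Rgt_not_eq, powerRZ_L_pos).
  induction X as [|i X IH]; intros Y m p hlen hne hX hY h1 h2;
    destruct Y as [|j Y]; try (simpl in hlen; lia); [congruence|].
  inversion hX as [|? ? hi hX']; subst. inversion hY as [|? ? hj hY']; subst.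
  simpl in hlen. injection hlen as hlen.
  apply cell_cons in h1 as h1'. destruct h1' as [k1 [hk1 e1]].
  destruct (list_eq_dec Nat.eq_dec X Y) as [<-|hXY].
  - apply cell_cons in h2 as [k2 [hk2 e2]]. rewrite e1 in e2. apply hinj in e2.
    assert (hij : i <> j) by congruence.
    destruct (K0_nesting i j hi hj hij (Ps i k1)) as [u [hu eu]]; [exists k1; auto|exists k2; auto|].
    exists u; split; [assumption|]. rewrite addr_shift_cons_Psi, e1, eu. reflexivity.
  - destruct (IH Y (m + 1)%Z p hlen hXY hX' hY') as [u [hu eu]];
      [apply cell_succ; eauto|apply cell_succ; eauto|].
    rewrite e1 in eu. apply hinj in eu.
    destruct (V0_in_Psi_image i u hi hu) as [u' [hu' eu']]; [exists k1; auto|].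
    exists u'; split; [assumption|]. rewrite addr_shift_cons_Psi, e1, eu, eu'. reflexivity.
Qed.

(** * Separation of cells *)

Definition offset_gap (e : pt) (rho : R) :=
  (forall k1 k2, K0 k1 -> K0 k2 -> padd (psub k1 k2) e <> pzero) ->
  forall k1 k2, K0 k1 -> K0 k2 -> rho <= pnorm (padd (psub k1 k2) e).

Lemma offset_gap_pos e : exists rho, 0 < rho /\ offset_gap e rho.
Proof.
  destruct (classic (forall k1 k2, K0 k1 -> K0 k2 -> padd (psub k1 k2) e <> pzero)) as [hne|hz].
  - destruct (compact_offset_gap K0 K0 e K0_closed K0_bounded K0_closed K0_bounded hne)
      as [rho [hrho h]].
    exists rho. split; [assumption|]. intros _. exact h.
  - exists 1. split; [lra|]. intros hne. contradiction.
Qed.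

(* The offset between two children [Ps i], [Ps j] of parents that touch at a vertex,
   the parents' vertices being the fixed points of [Ps c] and [Ps d]. *)
Definition child_offset (i j c d : nat) : pt :=
  pscale L (padd (psub (nu i) (nu j)) (psub (fixpt d) (fixpt c))).

Lemma uniform_child_offset_gap : exists rho, 0 < rho /\
  forall i j c d, ok i -> ok j -> ok c -> ok d -> offset_gap (child_offset i j c d) rho.
Proof.
  set (s := seq 1 N).
  destruct (uniform_pos_bound
              (fun q r => offset_gap (child_offset (fst (fst (fst q))) (snd (fst (fst q)))
                                                    (snd (fst q)) (snd q)) r)
              (list_prod (list_prod (list_prod s s) s) s)) as [rho [hrho h]].
  - intros q r r' hq [hr' hle] hne k1 k2 hk1 hk2. eapply Rle_trans; [exact hle|]. auto.
  - intros q _. apply offset_gap_pos.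
  - exists rho. split; [assumption|]. intros i j c d hi hj hc hd.
    assert (hs : forall x, ok x -> In x s) by (intros x hx; apply in_seq; red in hx; lia).
    apply (h (((i, j), c), d)). repeat apply in_prod; auto.
Qed.

Lemma touching_parents_shift X Y m :
  length X = length Y -> word_ok N X -> word_ok N Y ->
  (exists p, cell m X p /\ cell m Y p) ->
  exists c d, ok c /\ ok d /\
    addr_shift m X = padd (addr_shift m Y) (pscale (powerRZ L m) (psub (fixpt d) (fixpt c))).
Proof.
  intros hlen hX hY [p [hp1 hp2]].
  destruct (list_eq_dec Nat.eq_dec X Y) as [<-|hne].
  - exists 1%nat, 1%nat. split; [apply idx_ok_1|split; [apply idx_ok_1|]].
    generalize (addr_shift m X) (fixpt 1) (powerRZ L m). intros. pt_destruct; pt_ext; ring.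
  - destruct (cells_meet_at_vertex X Y m p hlen hne hX hY hp1 hp2) as [u [hu eu]].
    destruct (cells_meet_at_vertex Y X m p (eq_sym hlen) (not_eq_sym hne) hY hX hp2 hp1)
      as [u' [hu' eu']].
    destruct (V0_fixed u hu) as [c [hc ec]]. destruct (V0_fixed u' hu') as [d [hd ed]].
    apply Psi_fixed_eq in ec, ed. exists c, d. split; [assumption|split; [assumption|]].
    rewrite <- ec, <- ed. rewrite eu in eu'. revert eu'.
    generalize (addr_shift m X) (addr_shift m Y) (powerRZ L m). intros sX sY P e.
    pt_destruct. unfold padd, pscale, psub in *; simpl in *. injection e; intros. f_equal; lra.
Qed.

Lemma children_psub n i j X Y c d k1 k2 :
  addr_shift (n + 1) X =
    padd (addr_shift (n + 1) Y) (pscale (powerRZ L (n + 1)) (psub (fixpt d) (fixpt c))) ->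
  psub (padd (pscale (powerRZ L n) k1) (addr_shift n (i :: X)))
       (padd (pscale (powerRZ L n) k2) (addr_shift n (j :: Y))) =
  pscale (powerRZ L n) (padd (psub k1 k2) (child_offset i j c d)).
Proof.
  simpl addr_shift. intros ->. rewrite powerRZ_L_succ. unfold child_offset.
  generalize (nu i) (nu j) (fixpt c) (fixpt d) (addr_shift (n + 1) Y) (powerRZ L n).
  intros. pt_destruct; pt_ext; ring.
Qed.

(* Disjoint cells of the same level are far apart: at the first level where the
   ancestors touch, they touch at a vertex, and the gap between the two children is
   one of finitely many compact offset gaps. *)
Lemma cell_separation : exists rho, 0 < rho /\ forall X Y n a b,
  length X = length Y -> word_ok N X -> word_ok N Y ->
  ~ (exists z, cell n X z /\ cell n Y z) -> cell n X a -> cell n Y b ->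
  rho * powerRZ L n <= pdist a b.
Proof.
  destruct uniform_child_offset_gap as [rho [hrho hgap]]. exists rho. split; [assumption|].
  induction X as [|i X IH]; intros Y n a b hlen hX hY hdis ha hb;
    destruct Y as [|j Y]; try (simpl in hlen; lia).
  { exfalso. apply hdis. destruct K0_nonempty as [k hk].
    exists (padd (pscale (powerRZ L n) k) pzero). split; exists k; auto. }
  inversion hX as [|? ? hi hX']; subst. inversion hY as [|? ? hj hY']; subst.
  simpl in hlen. injection hlen as hlen.
  destruct (classic (exists z, cell (n + 1) X z /\ cell (n + 1) Y z)) as [htouch|hapart].
  - destruct (touching_parents_shift X Y (n + 1) hlen hX' hY' htouch)
      as [c [d [hc [hd hshift]]]].
    destruct ha as [k1 [hk1 ->]], hb as [k2 [hk2 ->]].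
    unfold pdist. rewrite (children_psub n i j X Y c d k1 k2 hshift), pnorm_scale.
    rewrite Rabs_right by (left; apply powerRZ_L_pos). rewrite Rmult_comm.
    apply Rmult_le_compat_l; [left; apply powerRZ_L_pos|].
    apply (hgap i j c d hi hj hc hd); auto.
    intros k1' k2' hk1' hk2' hz. apply hdis.
    exists (padd (pscale (powerRZ L n) k1') (addr_shift n (i :: X))).
    split; [exists k1'; auto|exists k2'; split; [assumption|]].
    apply psub_eq0. rewrite (children_psub n i j X Y c d k1' k2' hshift), hz.
    pt_ext; ring.
  - assert (hab : rho * powerRZ L (n + 1) <= pdist a b)
      by (apply (IH Y); auto; apply cell_succ; eauto).
    rewrite powerRZ_L_succ in hab.
    assert (0 < rho * powerRZ L n) by (apply Rmult_lt_0_compat; [|apply powerRZ_L_pos]; assumption).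
    nra.
Qed.

(** * Chains of cells *)

Inductive cell_chain (m : Z) : pt -> pt -> list (list nat) -> Prop :=
| cell_chain_one w x y : cell m w x -> cell m w y -> cell_chain m x y (w :: nil)
| cell_chain_cons w x z y ws :
    cell m w x -> cell m w z -> cell_chain m z y ws -> cell_chain m x y (w :: ws).

Lemma cell_chain_app m x z y ws1 ws2 :
  cell_chain m x z ws1 -> cell_chain m z y ws2 -> cell_chain m x y (ws1 ++ ws2).
Proof. intros h1 h2. induction h1; simpl; eapply cell_chain_cons; eauto. Qed.

Lemma cell_chain_restart m u x y w ws :
  cell_chain m u y (w :: ws) -> cell m w x -> cell_chain m x y (w :: ws).
Proof. intros h hx. inversion h; subst; [apply cell_chain_one|eapply cell_chain_cons]; eauto. Qed.

Lemma cell_chain_suffix m ws1 : forall x y w ws2,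
  cell_chain m x y (ws1 ++ w :: ws2) -> exists u, cell_chain m u y (w :: ws2).
Proof.
  induction ws1 as [|w1 ws1 IH]; intros x y w ws2 h; simpl in h; [eauto|].
  inversion h; subst; [destruct ws1; discriminate|eapply IH; eauto].
Qed.

Lemma cell_chain_nodup m x y ws : cell_chain m x y ws ->
  exists ws', NoDup ws' /\ incl ws' ws /\ cell_chain m x y ws'.
Proof.
  intros h. induction h as [w x y hx hy|w x z y ws hx hz h [ws' [hnd [hinc hch]]]].
  - exists (w :: nil). split; [repeat constructor; intros []|].
    split; [apply incl_refl|apply cell_chain_one; assumption].
  - destruct (In_dec (list_eq_dec Nat.eq_dec) w ws') as [hin|hnin].
    + apply in_split in hin as [w1 [w2 ->]].
      destruct (cell_chain_suffix m w1 z y w w2 hch) as [u hu].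
      exists (w :: w2). split; [apply NoDup_app_remove_l in hnd; assumption|].
      split; [|eapply cell_chain_restart; eauto].
      intros v [<-|hv]; [left; reflexivity|]. right. apply hinc, in_app_iff. right. right. exact hv.
    + exists (w :: ws'). split; [constructor; assumption|]. split.
      * intros v [<-|hv]; [left|right; apply hinc]; auto.
      * eapply cell_chain_cons; eauto.
Qed.

Lemma cell_chain_nth m x y ws : cell_chain m x y ws ->
  (1 <= length ws)%nat /\ cell m (nth 0 ws nil) x /\ cell m (nth (length ws - 1) ws nil) y /\
  forall i, (i + 1 < length ws)%nat ->
    exists z, cell m (nth i ws nil) z /\ cell m (nth (i + 1) ws nil) z.
Proof.
  intros h. induction h as [w x y hx hy|w x z y ws hx hz h [h1 [h2 [h3 h4]]]].
  - simpl. repeat split; auto. intros i hi; lia.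
  - simpl length. split; [lia|split; [assumption|split]].
    + replace (S (length ws) - 1)%nat with (S (length ws - 1)) by lia. exact h3.
    + intros [|i] hi; [exists z; auto|].
      destruct (h4 i ltac:(lia)) as [v hv]. exists v. exact hv.
Qed.

Lemma shift_nth_addr_shift m w : forall s : nat,
  fold_right padd pzero
    (map (fun t => pscale (powerRZ L (m + 1 + Z.of_nat t)) (nu (nth (t - s) w 1%nat)))
       (seq s (S (length w))))
  = addr_shift (m + Z.of_nat s) w.
Proof.
  induction w as [|i w IH]; intros s.
  - simpl. rewrite Nat.sub_diag. simpl. rewrite Hnu1. pt_ext; ring.
  - change (seq s (S (length (i :: w)))) with (s :: seq (S s) (S (length w))).
    cbn [map fold_right addr_shift]. rewrite Nat.sub_diag. f_equal.
    + replace (m + Z.of_nat s + 1)%Z with (m + 1 + Z.of_nat s)%Z by lia. reflexivity.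
    + replace (m + Z.of_nat s + 1)%Z with (m + Z.of_nat (S s))%Z by lia.
      rewrite <- (IH (S s)). f_equal. apply map_ext_in. intros t ht. apply in_seq in ht.
      replace (t - s)%nat with (S (t - S s)) by lia. reflexivity.
Qed.

Lemma cell_is_complex m w : word_ok N w -> is_complex L N nu K0 m (cell m w).
Proof.
  intros hw. exists (length w), (fun t => nth t w 1%nat). split.
  - intros t _. destruct (Nat.lt_ge_cases t (length w)) as [hl|hl].
    + eapply Forall_forall; [exact hw|]. apply nth_In; assumption.
    + rewrite nth_overflow by assumption. apply idx_ok_1.
  - assert (hsh : Defs.shift L nu m (length w) (fun t => nth t w 1%nat) = addr_shift m w).
    { transitivity (addr_shift (m + Z.of_nat 0) w); [|rewrite Z.add_0_r; reflexivity].
      rewrite <- shift_nth_addr_shift. unfold Defs.shift. f_equal.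
      apply map_ext. intros t. rewrite Nat.sub_0_r. reflexivity. }
    intros z. unfold complex, cell. rewrite hsh. reflexivity.
Qed.

Lemma chain_of_cell_chain m x y ws : cell_chain m x y ws -> (forall w, In w ws -> word_ok N w) ->
  chain L N nu K0 m x y (length ws).
Proof.
  intros h hok. destruct (cell_chain_nth m x y ws h) as [h1 [h2 [h3 h4]]].
  split; [assumption|]. exists (fun i => cell m (nth i ws nil)).
  split; [|auto]. intros i hi. apply cell_is_complex, hok, nth_In, hi.
Qed.

Definition children_meet (i j : nat) : Prop :=
  ok i /\ ok j /\ exists q, img (Ps i) K0 q /\ img (Ps j) K0 q.

Lemma children_connected a b : ok a -> ok b -> clos_refl_trans_1n nat children_meet a b.
Proof.
  intros ha hb. destruct V0_nonempty as [v0 hv0].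
  assert (hV1 : forall c, ok c -> Vn L N nu 1 (Ps c v0)).
  { intros c hc. exists (c :: nil), v0.
    split; [reflexivity|split; [constructor; [assumption|constructor]|split; [assumption|reflexivity]]]. }
  assert (hK : forall i u, img (Ps i) V0 u -> img (Ps i) K0 u)
    by (intros i u [u1 [hu1 ->]]; exists u1; split; [apply V0_in_K0|]; auto).
  assert (hwalk : forall u w, clos_refl_trans_1n pt (V1_edge L N nu) u w -> w = Ps b v0 ->
            forall i, ok i -> img (Ps i) V0 u -> clos_refl_trans_1n nat children_meet i b).
  { intros u w hc. induction hc as [u|u u' w [_ [_ [j [hj [hu hu']]]]] hc IH]; intros hw i hi hiu.
    - subst u. apply Relation_Operators.rt1n_trans with b; [|apply rt1n_refl].
      split; [assumption|split; [assumption|]]. exists (Ps b v0). split; [apply hK; auto|exists v0; split; auto].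
      apply V0_in_K0; assumption.
    - apply Relation_Operators.rt1n_trans with j; [|apply IH; auto].
      split; [assumption|split; [assumption|]]. exists u. split; apply hK; assumption. }
  apply (hwalk (Ps a v0) (Ps b v0)); auto.
  - apply clos_rt_rt1n, V1_connected; auto.
  - exists v0; auto.
Qed.

Lemma subcell_chain m (k : nat) : forall w x y, word_ok N w ->
  cell (m + Z.of_nat k) w x -> cell (m + Z.of_nat k) w y ->
  exists ws, cell_chain m x y ws /\
    forall v, In v ws -> exists u, length u = k /\ word_ok N u /\ v = u ++ w.
Proof.
  induction k as [|k IH]; intros w x y hw hx hy.
  { rewrite Z.add_0_r in hx, hy. exists (w :: nil). split; [apply cell_chain_one; assumption|].
    intros v [<-|[]]. exists nil. repeat split; constructor. }
  replace (m + Z.of_nat (S k))%Z with (m + Z.of_nat k + 1)%Z in hx, hy by lia.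
  apply cell_succ in hx as [a [ha hx]]. apply cell_succ in hy as [b [hb hy]].
  assert (hlift : forall c ws, ok c ->
            (forall v, In v ws -> exists u, length u = k /\ word_ok N u /\ v = u ++ c :: w) ->
            forall v, In v ws -> exists u, length u = S k /\ word_ok N u /\ v = u ++ w).
  { intros c ws hc hws v hv. destruct (hws v hv) as [u [hu1 [hu2 ->]]].
    exists (u ++ c :: nil). rewrite length_app, <- app_assoc. simpl.
    split; [lia|split; [apply Forall_app; split; [|constructor]|]]; auto. }
  revert x hx. induction (children_connected a b ha hb) as [a|a c b [_ [hc [q [[k1 [hk1 e1]] [k2 [hk2 e2]]]]]] hconn IHc];
    intros x hx.
  - destruct (IH (a :: w) x y ltac:(constructor; auto) hx hy) as [ws [hch hws]].
    exists ws. split; [assumption|]. apply (hlift a); assumption.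
  - set (z := padd (pscale (powerRZ L (m + Z.of_nat k + 1)) q) (addr_shift (m + Z.of_nat k + 1) w)).
    assert (hz1 : cell (m + Z.of_nat k) (a :: w) z)
      by (apply cell_cons; exists k1; rewrite <- e1; auto).
    assert (hz2 : cell (m + Z.of_nat k) (c :: w) z)
      by (apply cell_cons; exists k2; rewrite <- e2; auto).
    destruct (IH (a :: w) x z ltac:(constructor; auto) hx hz1) as [ws1 [h1 h1w]].
    destruct (IHc hc hb hy z hz2) as [ws2 [h2 h2w]].
    exists (ws1 ++ ws2). split; [eapply cell_chain_app; eauto|].
    intros v hv. apply in_app_or in hv as [hv|hv]; [apply (hlift a ws1); auto|auto].
Qed.

Fixpoint words (k : nat) : list (list nat) :=
  match k with
  | O => nil :: nil
  | S k => flat_map (fun i => map (cons i) (words k)) (seq 1 N)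
  end.

Lemma length_words k : length (words k) = (N ^ k)%nat.
Proof.
  induction k as [|k IH]; [reflexivity|].
  assert (hlen : forall s, length (flat_map (fun i => map (cons i) (words k)) s) =
                           (length s * length (words k))%nat).
  { induction s as [|i s IHs]; simpl; [reflexivity|]. rewrite length_app, length_map, IHs. reflexivity. }
  simpl words. rewrite hlen, length_seq, IH. reflexivity.
Qed.

Lemma in_words k u : length u = k -> word_ok N u -> In u (words k).
Proof.
  revert u; induction k as [|k IH]; intros u hl hu; destruct u as [|i u]; try discriminate.
  - left; reflexivity.
  - inversion hu as [|? ? hi hu']; subst. simpl. apply in_flat_map. exists i. split.
    + apply in_seq. red in hi. lia.
    + apply in_map, IH; auto.
Qed.

Lemma short_subcell_chain m (k : nat) w x y : word_ok N w ->
  cell (m + Z.of_nat k) w x -> cell (m + Z.of_nat k) w y ->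
  exists ws, cell_chain m x y ws /\ (forall v, In v ws -> word_ok N v) /\ (length ws <= N ^ k)%nat.
Proof.
  intros hw hx hy. destruct (subcell_chain m k w x y hw hx hy) as [ws [hch hws]].
  destruct (cell_chain_nodup m x y ws hch) as [ws' [hnd [hinc hch']]].
  exists ws'. split; [exact hch'|split].
  - intros v hv. destruct (hws v (hinc v hv)) as [u [_ [hu ->]]]. apply Forall_app; auto.
  - rewrite <- length_words, <- (length_map (fun u => u ++ w) (words k)).
    apply NoDup_incl_length; [exact hnd|]. intros v hv.
    destruct (hws v (hinc v hv)) as [u [hu1 [hu2 ->]]]. apply (in_map (fun u => u ++ w)), in_words; assumption.
Qed.

(** * Bounds on d_M *)

Lemma K0_norm_bound : exists r, 0 < r /\ forall p, K0 p -> pnorm p <= r.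
Proof.
  destruct K0_bounded as [r hr]. exists (Rabs r + 1). split; [pose proof (Rabs_pos r); lra|].
  intros p hp. pose proof (hr p hp). pose proof (Rle_abs r). lra.
Qed.

Lemma complex_diam M D r : (forall p, K0 p -> pnorm p <= r) -> is_complex L N nu K0 M D ->
  forall z z', D z -> D z' -> pdist z z' <= 2 * r * powerRZ L M.
Proof.
  intros hr [t [iota [_ hD]]] z z' hz hz'.
  apply hD in hz as [k [hk ->]]. apply hD in hz' as [k' [hk' ->]].
  unfold pdist. replace (psub _ _) with (pscale (powerRZ L M) (psub k k'))
    by (generalize (Defs.shift L nu M t iota); intros; pt_destruct; pt_ext; ring).
  rewrite pnorm_scale, Rabs_right by (left; apply powerRZ_L_pos).
  pose proof (pdist_le_pnorm_add k k'). pose proof (hr k hk). pose proof (hr k' hk').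
  pose proof (powerRZ_L_pos M). unfold pdist in *. nra.
Qed.

Lemma chain_pdist_le M r x y n : (forall p, K0 p -> pnorm p <= r) ->
  chain L N nu K0 M x y n -> pdist x y <= INR n * (2 * r * powerRZ L M).
Proof.
  intros hr [hn [D [hD [hx [hy hlink]]]]].
  assert (hreach : forall i, (i < n)%nat -> forall w, D i w ->
            pdist x w <= INR (S i) * (2 * r * powerRZ L M)).
  { induction i as [|i IH]; intros hi w hw.
    - rewrite Rmult_1_l. apply (complex_diam M (D 0%nat) r hr); [apply hD; lia|assumption..].
    - destruct (hlink i ltac:(lia)) as [z [hz1 hz2]]. replace (i + 1)%nat with (S i) in hz2 by lia.
      pose proof (IH ltac:(lia) z hz1).
      assert (pdist z w <= 2 * r * powerRZ L M)
        by (apply (complex_diam M (D (S i)) r hr); [apply hD; lia|assumption..]).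
      pose proof (pdist_triangle x z w). rewrite S_INR. lra. }
  replace n with (S (n - 1)) by lia. apply hreach; [lia|assumption].
Qed.

Lemma chain_length_bound : exists rho, 0 < rho /\ forall M (k : nat) x y,
  Kinf L K0 x -> Kinf L K0 y -> pdist x y < rho * powerRZ L (M + Z.of_nat k) ->
  exists n, chain L N nu K0 M x y n /\ (n <= 2 * N ^ k)%nat.
Proof.
  destruct cell_separation as [rho [hrho hsep]]. exists rho. split; [assumption|].
  intros M k x y hx hy hd. set (m := (M + Z.of_nat k)%Z).
  destruct (Kinf_in_cell x m hx) as [wx [hwx hxw]].
  destruct (Kinf_in_cell y m hy) as [wy [hwy hyw]].
  set (wx' := wx ++ repeat 1%nat (length wy)). set (wy' := wy ++ repeat 1%nat (length wx)).
  assert (hxw' : cell m wx' x) by (apply cell_pad; assumption).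
  assert (hyw' : cell m wy' y) by (apply cell_pad; assumption).
  assert (hlen : length wx' = length wy')
    by (unfold wx', wy'; rewrite !length_app, !repeat_length; lia).
  assert (hwx' : word_ok N wx') by (apply word_ok_pad; assumption).
  assert (hwy' : word_ok N wy') by (apply word_ok_pad; assumption).
  destruct (classic (exists p, cell m wx' p /\ cell m wy' p)) as [[p [hp1 hp2]]|hapart].
  2: { pose proof (hsep wx' wy' m x y hlen hwx' hwy' hapart hxw' hyw'). unfold m in *. lra. }
  destruct (short_subcell_chain M k wx' x p hwx' hxw' hp1) as [ws1 [hc1 [hok1 hl1]]].
  destruct (short_subcell_chain M k wy' p y hwy' hp2 hyw') as [ws2 [hc2 [hok2 hl2]]].
  exists (length (ws1 ++ ws2)). split.
  - apply chain_of_cell_chain; [eapply cell_chain_app; eauto|].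
    intros v hv. apply in_app_or in hv as [hv|hv]; auto.
  - rewrite length_app. lia.
Qed.

Lemma dM_of_chain M x y n : x <> y -> chain L N nu K0 M x y n ->
  exists n', dM_is L N nu K0 M x y n' /\ (n' <= n)%nat.
Proof.
  intros hxy hn. destruct (least_nat (chain L N nu K0 M x y) n hn) as [n' [hn' hmin]].
  exists n'. split; [right; auto|apply hmin, hn].
Qed.

Lemma dM_lower_bound M r x y n : 0 < r -> (forall p, K0 p -> pnorm p <= r) ->
  dM_is L N nu K0 M x y n -> / (2 * r * powerRZ L M) * pdist x y <= INR n.
Proof.
  intros hr0 hr hn. pose proof (powerRZ_L_pos M) as hP.
  assert (hd : pdist x y <= INR n * (2 * r * powerRZ L M)).
  { destruct hn as [[-> ->]|[_ [hch _]]]; [rewrite pdist_xx; simpl; lra|].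
    apply (chain_pdist_le M r); assumption. }
  apply (Rmult_le_reg_r (2 * r * powerRZ L M)); [nra|].
  rewrite Rmult_assoc, (Rmult_comm (pdist x y)), <- Rmult_assoc, Rinv_l by nra. lra.
Qed.

(* The constant is chosen so that 2 N^(k+1) <= C7 d^(d_f) whenever d >= rho L^(M+k). *)
Lemma dM_upper_bound M : exists C7, 0 < C7 /\ forall x y, Kinf L K0 x -> Kinf L K0 y ->
  exists n, dM_is L N nu K0 M x y n /\
    INR n <= Rmax 2 (C7 * rpow (pdist x y) (ln (INR N) / ln L)).
Proof.
  destruct chain_length_bound as [rho [hrho hchain]].
  assert (hN : 1 <= INR N) by (replace 1 with (INR 1) by reflexivity; apply le_INR; lia).
  set (c0 := Rpower rho (ln (INR N) / ln L) * Rpower (INR N) (IZR M - 1)).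
  assert (hc0 : 0 < c0) by (apply Rmult_lt_0_compat; apply exp_pos).
  exists (2 / c0). split; [apply Rdiv_lt_0_compat; lra|].
  intros x y hx hy. destruct (classic (x = y)) as [<-|hxy].
  { exists 0%nat. split; [left; auto|]. pose proof (Rmax_l 2 (2 / c0 * rpow (pdist x x) (ln (INR N) / ln L))). simpl; lra. }
  destruct (powerRZ_unbounded L rho (pdist x y) M HL hrho) as [k0 hk0].
  destruct (least_nat (fun k => pdist x y < rho * powerRZ L (M + Z.of_nat k)) k0 hk0)
    as [k [hk hkmin]].
  destruct (hchain M k x y hx hy hk) as [n [hn hnk]].
  destruct (dM_of_chain M x y n hxy hn) as [n' [hn' hn'n]].
  exists n'. split; [assumption|].
  assert (hle : INR n' <= 2 * INR N ^ k).
  { rewrite <- pow_INR. replace 2 with (INR 2) by reflexivity. rewrite <- mult_INR. apply le_INR. lia. }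
  destruct k as [|k]; [simpl in hle; pose proof (Rmax_l 2 (2 / c0 * rpow (pdist x y) (ln (INR N) / ln L))); lra|].
  eapply Rle_trans; [exact hle|]. eapply Rle_trans; [|apply Rmax_r].
  assert (hfar : rho * powerRZ L (M + Z.of_nat k) <= pdist x y).
  { apply Rnot_lt_le. intros hlt. specialize (hkmin k hlt). lia. }
  pose proof (rpow_scale_lower L (INR N) rho (pdist x y) (M + Z.of_nat k) HL hN hrho hfar) as hpow.
  rewrite plus_IZR, <- INR_IZR_INZ in hpow.
  replace (IZR M + INR k) with ((IZR M - 1) + INR (S k)) in hpow by (rewrite S_INR; ring).
  rewrite Rpower_plus, Rpower_pow, <- Rmult_assoc in hpow by lra. fold c0 in hpow.
  apply (Rmult_le_compat_l (2 / c0)) in hpow; [|left; apply Rdiv_lt_0_compat; lra].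
  replace (2 / c0 * (c0 * INR N ^ S k)) with (2 * INR N ^ S k) in hpow by (field; lra).
  exact hpow.
Qed.

End NestedFractal.

Theorem lemmaA3 (L : R) (N : nat) (nu : nat -> pt) (K0 : pt -> Prop) :
  1 < L -> (2 <= N)%nat -> nu 1%nat = pzero ->
  simple_nested_fractal L N nu K0 ->
  (exists a b c, a <> b /\ a <> c /\ b <> c /\ essential_fixed L N nu a /\
     essential_fixed L N nu b /\ essential_fixed L N nu c) ->
  forall M : Z, exists C6 C7 : R, 0 < C6 /\ 0 < C7 /\
    forall x y, Kinf L K0 x -> Kinf L K0 y ->
      exists n : nat, dM_is L N nu K0 M x y n /\
        C6 * pdist x y <= INR n /\
        INR n <= Rmax 2 (C7 * rpow (pdist x y) (ln (INR N) / ln L)).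
Proof.
  intros HL HN Hnu1 Hsnf _ M.
  destruct (K0_norm_bound L N nu K0 Hsnf) as [r [hr0 hr]].
  destruct (dM_upper_bound L N nu K0 HL HN Hnu1 Hsnf M) as [C7 [hC7 hupper]].
  exists (/ (2 * r * powerRZ L M)), C7. split; [|split; [assumption|]].
  - pose proof (powerRZ_lt L M ltac:(lra)). apply Rinv_0_lt_compat. nra.
  - intros x y hx hy. destruct (hupper x y hx hy) as [n [hn hle]].
    exists n. split; [assumption|split; [|assumption]].
    exact (dM_lower_bound L N nu K0 HL HN M r x y n hr0 hr hn).
Qed.
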